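(* Let $E=(A\subset B)\in\mathcal S$ and $\ell\ge0$, and let $\pi:E\to E|^\ell=(A/p^\ell A\subset B/p^\ell A)$ be the morphism given by the canonical projection $B\to B/p^\ell A$. Then $\pi$ is a minimal left approximation of $E$ in $\mathcal S_\ell$: every morphism $E\to F$ with $F\in\mathcal S_\ell$ factors through $\pi$, and every endomorphism $u$ of $E|^\ell$ with $u\pi=\pi$ is an automorphism.
   Context: Let $R$ be a commutative principal ideal domain, $p$ a generator of a maximal ideal. A $p$-module is a finite-length $R$-module annihilated by some power of $p$. $\mathcal S$ is the category of embeddings $(A\subset B)$ of a submodule in a $p$-module, morphisms $(A\subset B)\to(A'\subset B')$ being $R$-maps $f:B\to B'$ with $f(A)\subseteq A'$. $\mathcal S_\ell$ is the full subcategory of objects with $p^\ell A=0$. *)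

From HB Require Import structures.
From mathcomp Require Import all_boot all_order all_algebra.
Set Implicit Arguments. Unset Strict Implicit. Unset Printing Implicit Defensive.
Import Order.TTheory GRing.Theory.
Local Open Scope ring_scope.

Section Defs.
Variable R : idomainType.

Definition dvdR (a x : R) : Prop := exists c : R, x = c * a.

Definition is_ideal (I : R -> Prop) : Prop :=
  [/\ I 0, (forall x y, I x -> I y -> I (x + y)) & (forall r x, I x -> I (r * x))].

Definition is_PID : Prop :=
  forall I : R -> Prop, is_ideal I -> exists a : R, forall x, I x <-> dvdR a x.

Definition is_maximal_ideal (I : R -> Prop) : Prop :=
  [/\ is_ideal I, ~ I 1 &
      forall J : R -> Prop, is_ideal J -> (forall x, I x -> J x) ->
        (forall x, J x <-> I x) \/ J 1].

Definition gen_maximal (p : R) : Prop := is_maximal_ideal (dvdR p).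

Section Modules.
Variable B : lmodType R.

Definition is_submod (A : B -> Prop) : Prop :=
  [/\ A 0, (forall x y, A x -> A y -> A (x + y)) & (forall (r : R) x, A x -> A (r *: x))].

Definition strict_subset (X Y : B -> Prop) : Prop :=
  (forall x, X x -> Y x) /\ exists y, Y y /\ ~ X y.

Definition finite_length : Prop :=
  exists N : nat, forall (k : nat) (X : nat -> B -> Prop),
    (forall i, is_submod (X i)) ->
    (forall i, (i < k)%N -> strict_subset (X i) (X i.+1)) -> (k <= N)%N.

Definition p_module (p : R) : Prop :=
  finite_length /\ exists n : nat, forall b : B, p ^+ n *: b = 0.
End Modules.

Definition objS (p : R) (B : lmodType R) (A : B -> Prop) : Prop :=
  p_module B p /\ is_submod A.

Definition objSl (p : R) (l : nat) (B : lmodType R) (A : B -> Prop) : Prop :=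
  objS p A /\ forall a, A a -> p ^+ l *: a = 0.

Definition is_morphS (B B' : lmodType R) (A : B -> Prop) (A' : B' -> Prop)
  (f : B -> B') : Prop := forall a, A a -> A' (f a).

(* pi : B -> B' is (a presentation of) the canonical projection
   B -> B / p^l A, and A' = pi(A) = A / p^l A.  That is: pi is surjective,
   its kernel is exactly p^l A, and A' is the image of A. *)
Definition is_restr_proj (p : R) (l : nat) (B B' : lmodType R)
  (A : B -> Prop) (A' : B' -> Prop) (pi : {linear B -> B'}) : Prop :=
  [/\ forall b' : B', exists b : B, pi b = b',
      forall b : B, pi b = 0 <-> exists a, A a /\ b = p ^+ l *: a &
      forall b' : B', A' b' <-> exists a, A a /\ b' = pi a].
End Defs.

From HB Require Import structures.
From mathcomp Require Import all_boot all_order all_algebra.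
Set Implicit Arguments. Unset Strict Implicit. Unset Printing Implicit Defensive.
Import GRing.Theory.
Local Open Scope ring_scope.

(* The kernel of the projection B -> B/p^l A is p^l A, which every morphism
   into an object of S_l kills; so each such morphism factors through the
   surjection, and an endomorphism u with u pi = pi is the identity. *)

Lemma is_submod_ext (R : idomainType) (B : lmodType R) (X Y : B -> Prop) :
  (forall x, X x <-> Y x) -> is_submod X -> is_submod Y.
Proof.
move=> XY [X0 XD XZ]; split; first exact/XY.
- by move=> x y /XY hx /XY hy; apply/XY/XD.
- by move=> r x /XY hx; apply/XY/XZ.
Qed.

Section LinearImage.
Variables (R : idomainType) (B B' : lmodType R) (pi : {linear B -> B'}).

Lemma submod_preimage (X : B' -> Prop) :
  is_submod X -> is_submod (fun b => X (pi b)).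
Proof.
case=> X0 XD XZ; split; first by rewrite linear0.
- by move=> x y hx hy; rewrite linearD; apply: XD.
- by move=> r x hx; rewrite linearZ; apply: XZ.
Qed.

Lemma submod_image (A : B -> Prop) :
  is_submod A -> is_submod (fun b' => exists a, A a /\ b' = pi a).
Proof.
case=> A0 AD AZ; split; first by exists 0; rewrite linear0.
- move=> _ _ [a1 [h1 ->]] [a2 [h2 ->]].
  by exists (a1 + a2); rewrite linearD; split => //; apply: AD.
- move=> r _ [a [ha ->]].
  by exists (r *: a); rewrite linearZ; split => //; apply: AZ.
Qed.

Hypothesis pi_surj : forall b' : B', exists b : B, pi b = b'.

Lemma eq_comp_surj (T : Type) (u v : B' -> T) :
  (forall b, u (pi b) = v (pi b)) -> u =1 v.
Proof. by move=> huv b'; have [b <-] := pi_surj b'. Qed.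

(* Preimages under pi turn a strict chain in B' into a strict chain in B. *)
Lemma finite_length_surj : finite_length B -> finite_length B'.
Proof.
case=> N hN; exists N => k X hX hS.
apply: (hN k (fun i b => X i (pi b))) => [i | i hi].
  exact: submod_preimage.
have [hsub [y [hy hny]]] := hS i hi; have [b hb] := pi_surj y.
by split=> [x /hsub // |]; exists b; rewrite hb.
Qed.

Lemma p_module_surj (p : R) : p_module B p -> p_module B' p.
Proof.
case=> /finite_length_surj hfl [n hn]; split => //.
by exists n; apply: eq_comp_surj => b; rewrite -linearZ hn !linear0.
Qed.

Section Factor.
Variables (C : lmodType R) (f : {linear B -> C}).
Hypothesis f_ker : forall b : B, pi b = 0 -> f b = 0.

Let pi_surjb (b' : B') : exists b : B, pi b == b'.
Proof. by have [b hb] := pi_surj b'; exists b; apply/eqP. Qed.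

Definition factor_surj (b' : B') : C := f (xchoose (pi_surjb b')).

Lemma factor_surjE b : factor_surj (pi b) = f b.
Proof.
rewrite /factor_surj; set c := xchoose _.
have /eqP hc : pi c == pi b := xchooseP (pi_surjb (pi b)).
apply/eqP; rewrite -subr_eq0 -linearB; apply/eqP/f_ker.
by rewrite linearB hc subrr.
Qed.

Lemma factor_surj_is_linear : linear factor_surj.
Proof.
move=> a x y; have [bx <-] := pi_surj x; have [by_ <-] := pi_surj y.
by rewrite -linearP !factor_surjE linearP.
Qed.

HB.instance Definition _ :=
  GRing.isLinear.Build R B' C *:%R factor_surj factor_surj_is_linear.

Lemma linear_factor_surj :
  exists g : {linear B' -> C}, forall b, g (pi b) = f b.
Proof. by exists factor_surj; apply: factor_surjE. Qed.
End Factor.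
End LinearImage.

Theorem lemma8 (R : idomainType) (hR : is_PID R) (p : R) (hp : gen_maximal p)
  (B : lmodType R) (A : B -> Prop) (hE : objS p A) (l : nat)
  (B' : lmodType R) (A' : B' -> Prop) (pi : {linear B -> B'})
  (hpi : is_restr_proj p l A A' pi) :
  (* pi is a morphism E -> E|^l, and E|^l lies in S_l *)
  [/\ is_morphS A A' pi, objSl p l A',
  (* every morphism E -> F with F in S_l factors through pi *)
      (forall (C : lmodType R) (D : C -> Prop), objSl p l D ->
        forall f : {linear B -> C}, is_morphS A D f ->
        exists g : {linear B' -> C}, is_morphS A' D g /\ forall b, g (pi b) = f b) &
  (* every endomorphism u of E|^l with u pi = pi is an automorphism *)
      (forall u : {linear B' -> B'}, is_morphS A' A' u ->
        (forall b, u (pi b) = pi b) ->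
        exists v : {linear B' -> B'}, [/\ is_morphS A' A' v, cancel u v & cancel v u])].
Proof.
case: hpi => pi_surj pi_ker A'E; case: hE => hB hA.
have pi_mor : is_morphS A A' pi by move=> a ha; apply/A'E; exists a.
split => //.
- split; first split; first exact: p_module_surj.
    by apply: is_submod_ext (submod_image pi hA) => b'; split => /A'E.
  by move=> _ /A'E [a [ha ->]]; rewrite -linearZ; apply/pi_ker; exists a.
- move=> C D [_ hD] f f_mor.
  have f_ker b : pi b = 0 -> f b = 0.
    by case/pi_ker=> a [ha ->]; rewrite linearZ; apply/hD/f_mor.
  have [g gE] := linear_factor_surj pi_surj f_ker.
  by exists g; split=> // _ /A'E [a [ha ->]]; rewrite gE; apply: f_mor.
- move=> u _ u_pi; have uid : u =1 id := eq_comp_surj pi_surj u_pi.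
  by exists u; split=> // x; rewrite !uid.
Qed.
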